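(* Let $p=2$, $a\in\mathbb{C}_2$, $a\ne0$, $A=|a|_2$, $f(x)=\frac{ax}{x^2+a}$, and $t_1=\sqrt{-2a}$, $t_2=-\sqrt{-2a}$. Then for every $0<r\le\frac{\sqrt A}{2\sqrt2}$, $$f(S_r(t_1)\setminus\mathcal P_2)\subseteq S_r(t_2),\qquad f(S_r(t_2)\setminus\mathcal P_2)\subseteq S_r(t_1).$$
   Context: $S_r(t)=\{x\in\mathbb{C}_2:|x-t|_2=r\}$. $f$ is defined on $\mathbb{C}_p\setminus\{\pm\sqrt{-a}\}$ and $f\circ f$ on $\mathbb{C}_p$ minus the points $\pm\sqrt{-a}$ and $\pm\sqrt{\frac{(-3\pm\sqrt5)a}{2}}$. $\mathcal P_2=\{x\in\mathbb{C}_p:\exists n\in\mathbb{N},\ f^n(x)\in\{\pm\sqrt{-a},\ \pm\sqrt{(-3\pm\sqrt5)a/2}\}\}$. The points $t_1,t_2$ form a $2$-cycle of $f$. *)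

From HB Require Import structures.
From mathcomp Require Import all_boot all_order all_algebra all_field.
Set Implicit Arguments. Unset Strict Implicit. Unset Printing Implicit Defensive.
Import Order.TTheory GRing.Theory Num.Theory.
Local Open Scope ring_scope.

Definition nonarch_abs (K : fieldType) (R : realFieldType) (v : K -> R) : Prop :=
  [/\ forall x, 0 <= v x,
      forall x, v x = 0 <-> x = 0,
      forall x y, v (x * y) = v x * v y
    & forall x y, v (x + y) <= Num.max (v x) (v y)].

Definition abs_complete (K : fieldType) (R : realFieldType) (v : K -> R) : Prop :=
  forall u : nat -> K,
    (forall e : R, 0 < e -> exists N : nat, forall m n : nat,
        (N <= m)%N -> (N <= n)%N -> v (u m - u n) < e) ->
    exists l : K, forall e : R, 0 < e -> exists N : nat, forall n : nat,
        (N <= n)%N -> v (u n - l) < e.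

Definition is_C2 (K : closedFieldType) (R : rcfType) (v : K -> R) : Prop :=
  [/\ [pchar K] =i pred0, nonarch_abs v, abs_complete v & v 2 = 2^-1].

Definition fmap (K : fieldType) (a x : K) : K := a * x / (x ^+ 2 + a).

Definition exc_point (K : fieldType) (a y : K) : Prop :=
  y ^+ 2 = - a \/ exists s : K, s ^+ 2 = 5 /\ 2 * y ^+ 2 = (-3 + s) * a.

Definition P2 (K : fieldType) (a x : K) : Prop :=
  exists n : nat, exc_point a (iter n (fmap a) x).

Definition sphere (K : fieldType) (R : realFieldType) (v : K -> R) (r : R) (t x : K) : Prop :=
  v (x - t) = r.

From HB Require Import structures.
From mathcomp Require Import all_boot all_order all_algebra all_field.
From mathcomp Require Import ring lra.
Import Order.TTheory GRing.Theory Num.Theory.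
Set Implicit Arguments. Unset Strict Implicit. Unset Printing Implicit Defensive.
Local Open Scope ring_scope.

(* Write x = t + h with |h| = r and t^2 = -2a.  Then
   f(x) + t = h (t h - 3 a) / (-a + 2 t h + h^2).
   Since |2| = 1/2 we have |t|^2 = |a|/2, and r^2 <= |a|/8 gives |t| r <= |a|/4,
   so -3a dominates the numerator (|3| = 1) and -a dominates the denominator;
   by the strict ultrametric inequality |f(x) + t| = r |a| / |a| = r. *)

Section NonarchimedeanAbsoluteValue.
Variables (K : fieldType) (R : realFieldType) (v : K -> R).
Hypothesis Hv : nonarch_abs v.

Lemma absv_ge0 x : 0 <= v x. Proof. by case: Hv. Qed.
Lemma absv_eq0 x : v x = 0 <-> x = 0. Proof. by case: Hv. Qed.
Lemma absvM x y : v (x * y) = v x * v y. Proof. by case: Hv. Qed.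
Lemma absvD_le_max x y : v (x + y) <= Num.max (v x) (v y). Proof. by case: Hv. Qed.

Lemma absv_gt0 {x} : x != 0 -> 0 < v x.
Proof. by move=> nz; rewrite lt_def absv_ge0 andbT; apply/eqP => /absv_eq0/eqP; apply/negP. Qed.

Lemma absv1 : v 1 = 1.
Proof.
have h := absvM 1 1; rewrite mulr1 in h.
by apply: (mulfI (lt0r_neq0 (absv_gt0 (oner_neq0 _)))); rewrite -h mulr1.
Qed.

Lemma absvN x : v (- x) = v x.
Proof.
have h := absvM (-1) (-1); rewrite mulrNN mulr1 absv1 in h.
have h0 := absv_ge0 (-1).
have vN1 : v (-1) = 1 by nra.
by rewrite -mulN1r absvM vN1 mul1r.
Qed.

Lemma absvV x : x != 0 -> v x^-1 = (v x)^-1.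
Proof.
move=> nz; have h := absvM x x^-1; rewrite mulfV // absv1 in h.
by apply: (mulfI (lt0r_neq0 (absv_gt0 nz))); rewrite -h mulfV // lt0r_neq0 // absv_gt0.
Qed.

Lemma absvD_dominant x y : v y < v x -> v (x + y) = v x.
Proof.
move=> lt_yx; apply/eqP; rewrite eq_le; apply/andP; split.
  by have := absvD_le_max x y; rewrite (max_idPl (ltW lt_yx)).
have := absvD_le_max (x + y) (- y); rewrite addrK absvN => le_x.
case: (leP (v x) (v (x + y))) => // lt_xy.
by move: le_x; rewrite leNgt gt_max lt_xy lt_yx.
Qed.

Lemma absv3 : v 2 < 1 -> v 3 = 1.
Proof. by move=> v2; rewrite (_ : 3 = 1 + 2) // absvD_dominant absv1. Qed.

End NonarchimedeanAbsoluteValue.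

Lemma sqr_shift_addr (K : comPzRingType) (a t h : K) :
  t ^+ 2 = - (2 * a) -> (t + h) ^+ 2 + a = - a + (2 * t * h + h ^+ 2).
Proof.
move=> ht; transitivity (t ^+ 2 + 2 * t * h + h ^+ 2 + a); first by ring.
by rewrite ht; ring.
Qed.

Lemma fmap_shift_addr (K : fieldType) (a t h : K) :
  t ^+ 2 = - (2 * a) -> (t + h) ^+ 2 + a != 0 ->
  fmap a (t + h) + t = h * (- (3 * a) + t * h) / ((t + h) ^+ 2 + a).
Proof.
move=> ht nz; rewrite /fmap; apply: (mulIf nz); rewrite mulrDl !divfK //.
transitivity (t * (t ^+ 2 + 2 * a) + h * (2 * t ^+ 2 + a) + t * h ^+ 2); first by ring.
by rewrite ht; ring.
Qed.

Lemma sqr_radius_le (R : rcfType) (A r : R) :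
  0 < A -> 0 < r -> r <= Num.sqrt A / (2 * Num.sqrt 2) -> r ^+ 2 * 8 <= A.
Proof.
move=> A0 r0 hr.
have q0 : 0 < Num.sqrt (2 : R) by rewrite sqrtr_gt0; lra.
have q2 : Num.sqrt (2 : R) ^+ 2 = 2 by rewrite sqr_sqrtr //; lra.
have sA : Num.sqrt A ^+ 2 = A by rewrite sqr_sqrtr // ltW.
have le : r * (2 * Num.sqrt 2) <= Num.sqrt A by rewrite -ler_pdivlMr ?mulr_gt0.
have : (r * (2 * Num.sqrt 2)) ^+ 2 <= Num.sqrt A ^+ 2.
  by rewrite ler_sqr ?nnegrE ?sqrtr_ge0 //; apply: mulr_ge0; [lra| rewrite mulr_ge0 // ltW].
rewrite sA exprMn (exprMn 2) q2; lra.
Qed.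

Lemma radius_mul_le (R : realFieldType) (A T r : R) :
  0 <= T -> 0 < r -> T ^+ 2 = A / 2 -> r ^+ 2 * 8 <= A -> T * r <= A / 4.
Proof.
move=> T0 r0 TA rA.
have A0 : 0 <= A by nra.
have sq : (T * r) ^+ 2 <= (A / 4) ^+ 2 by rewrite exprMn TA; nra.
by move: sq; rewrite ler_sqr ?nnegrE //; [exact: mulr_ge0 T0 (ltW r0) | lra].
Qed.

Section TwoCycleSpheres.
Variables (K : fieldType) (R : rcfType) (v : K -> R).
Hypotheses (Hv : nonarch_abs v) (v2 : v 2 = 2^-1).
Variables (a t : K).
Hypotheses (ha : a != 0) (ht : t ^+ 2 = - (2 * a)).

Lemma absv_cycle_point : v t ^+ 2 = v a / 2.
Proof. by rewrite expr2 -(absvM Hv) -expr2 ht (absvN Hv) (absvM Hv) v2 mulrC. Qed.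

Lemma absv_shift_denominator h :
  v t * v h <= v a / 4 -> v h ^+ 2 * 8 <= v a -> v (- a + (2 * t * h + h ^+ 2)) = v a.
Proof.
move=> th h8; have A0 := absv_gt0 Hv ha.
rewrite (absvD_dominant Hv) ?(absvN Hv) //.
apply: (le_lt_trans (absvD_le_max Hv _ _)).
rewrite gt_max expr2 !(absvM Hv) v2 -expr2; apply/andP; split; lra.
Qed.

Lemma absv_shift_numerator h :
  v t * v h < v a -> v (h * (- (3 * a) + t * h)) = v h * v a.
Proof.
have v3 : v 3 = 1 by apply: absv3; rewrite // v2 invf_lt1; lra.
have v3a : v (- (3 * a)) = v a by rewrite (absvN Hv) (absvM Hv) v3 mul1r.
by move=> th; rewrite (absvM Hv) (absvD_dominant Hv) v3a // (absvM Hv).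
Qed.

Lemma fmap_sphere_opp r :
  0 < r -> r <= Num.sqrt (v a) / (2 * Num.sqrt 2) ->
  forall x, sphere v r t x -> sphere v r (- t) (fmap a x).
Proof.
move=> r0 hr x; rewrite /sphere opprK => hx.
have xE : x = t + (x - t) by rewrite addrC subrK.
move: (x - t) hx xE => h vh ->.
have A0 := absv_gt0 Hv ha.
have h8 : v h ^+ 2 * 8 <= v a by rewrite vh; apply: sqr_radius_le.
have th : v t * v h <= v a / 4.
  by apply: radius_mul_le (absv_ge0 Hv t) _ absv_cycle_point h8; rewrite vh.
have vden := absv_shift_denominator th h8.
rewrite -sqr_shift_addr // in vden.
have den0 : (t + h) ^+ 2 + a != 0.
  by apply/eqP => /(absv_eq0 Hv) e; move: A0; rewrite -vden e ltxx.
rewrite fmap_shift_addr // (absvM Hv) (absvV Hv) // vden absv_shift_numerator; last by lra.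
by rewrite vh mulfK ?lt0r_neq0.
Qed.

End TwoCycleSpheres.

Theorem theorem4p2 (K : closedFieldType) (R : rcfType) (v : K -> R)
  (HK : is_C2 v) (a : K) (ha : a != 0) (t1 t2 : K)
  (ht1 : t1 ^+ 2 = - (2 * a)) (ht2 : t2 = - t1) (r : R)
  (hr0 : 0 < r) (hr : r <= Num.sqrt (v a) / (2 * Num.sqrt 2)) :
  (forall x : K, sphere v r t1 x -> ~ P2 a x -> sphere v r t2 (fmap a x)) /\
  (forall x : K, sphere v r t2 x -> ~ P2 a x -> sphere v r t1 (fmap a x)).
Proof.
case: HK => _ Hv _ v2.
have ht2sq : t2 ^+ 2 = - (2 * a) by rewrite ht2 sqrrN.
split => x hx _.
  by rewrite ht2; exact: fmap_sphere_opp hx.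
have -> : t1 = - t2 by rewrite ht2 opprK.
exact: fmap_sphere_opp hx.
Qed.
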